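(* For every $a>0$ and $\alpha>0$, the first Robin eigenvalue of an interval $I_a$ of length $a$ satisfies \[ \frac{2\alpha\pi^2}{a(\pi^2+2\alpha a)}\le\lambda_1(I_a,\alpha)\le\frac{\pi^2}{a^2}\cdot\frac{\pi^2+2a\alpha-\sqrt{64a\alpha+(\pi^2-2a\alpha)^2}}{2(\pi^2-8)}. \]
   Context: For an interval $I_a\subset\mathbb{R}$ of length $a>0$ and $\alpha>0$, $\lambda_1(I_a,\alpha)<\lambda_2(I_a,\alpha)<\cdots$ denote the eigenvalues of the Robin problem $-u''=\lambda u$ on $I_a$ with $\partial_\nu u+\alpha u=0$ at both endpoints ($\partial_\nu$ the outward derivative). Equivalently, $\lambda_1(I_a,\alpha)$ is the unique root in $(0,\pi^2/a^2)$ of $\alpha=\sqrt\lambda\tan(a\sqrt\lambda/2)$. *)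

From Stdlib Require Import Reals.
Open Scope R_scope.

(* lambda1(I_a, alpha): by the context, the first Robin eigenvalue of an
   interval of length a with parameter alpha is the unique root in
   (0, PI^2/a^2) of  alpha = sqrt(lambda) * tan(a * sqrt(lambda) / 2).
   [is_robin_lambda1 a alpha lam] says that lam is this root. *)
Definition is_robin_lambda1 (a alpha lam : R) : Prop :=
  0 < lam < PI ^ 2 / a ^ 2 /\ alpha = sqrt lam * tan (a * sqrt lam / 2).

From Stdlib Require Import Reals Lra.
Open Scope R_scope.

(* With x = a sqrt(lam) / 2 in (0, PI/2) the Robin equation reads
   lam = (2x/a)^2 and alpha = (2x/a) tan x.  The lower bound on lam is then
   the Becker-Stark inequality tan x <= PI^2 x / (PI^2 - 4x^2), and the upper
   bound, once solved as a quadratic inequality in lam a^2 / PI^2, is the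
   refined lower estimate tan x >= x (PI^4 - 4 (PI^2 - 8) x^2) / (PI^2 (PI^2 - 4x^2)).
   Both follow termwise from tan x = sum_k 8x / ((2k-1)^2 PI^2 - 4x^2);
   here they are proved instead by Taylor bounds on sin and
   cos, at 0 for x <= 3/4 and at PI/2 otherwise, which leaves polynomial
   inequalities in x and PI, checked on boxes with PI in [333/106, 355/113]. *)

Ltac taylor_bounds bound :=
  generalize bound;
  unfold sin_approx, cos_approx, sin_term, cos_term;
  cbn [sum_f_R0 Nat.mul Nat.add];
  repeat rewrite fact_simpl, mult_INR;
  cbn [Factorial.fact INR];
  intros; lra.

Lemma sin_taylor_3_5 x : 0 <= x <= PI ->
  x - x^3/6 <= sin x <= x - x^3/6 + x^5/120.
Proof. intros [H0 H1]; taylor_bounds (sin_bound x 0 H0 H1). Qed.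

Lemma sin_taylor_7_9 x : 0 <= x <= PI ->
  x - x^3/6 + x^5/120 - x^7/5040 <= sin x <=
  x - x^3/6 + x^5/120 - x^7/5040 + x^9/362880.
Proof. intros [H0 H1]; taylor_bounds (sin_bound x 1 H0 H1). Qed.

Lemma cos_taylor_2_4 x : -2 <= x <= 2 ->
  1 - x^2/2 <= cos x <= 1 - x^2/2 + x^4/24.
Proof. intros [H0 H1]; taylor_bounds (pre_cos_bound x 0 H0 H1). Qed.

Lemma cos_taylor_6_8 x : -2 <= x <= 2 ->
  1 - x^2/2 + x^4/24 - x^6/720 <= cos x <=
  1 - x^2/2 + x^4/24 - x^6/720 + x^8/40320.
Proof. intros [H0 H1]; taylor_bounds (pre_cos_bound x 1 H0 H1). Qed.

Lemma cos_taylor_10_12 x : -2 <= x <= 2 ->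
  1 - x^2/2 + x^4/24 - x^6/720 + x^8/40320 - x^10/3628800 <= cos x <=
  1 - x^2/2 + x^4/24 - x^6/720 + x^8/40320 - x^10/3628800 + x^12/479001600.
Proof. intros [H0 H1]; taylor_bounds (pre_cos_bound x 2 H0 H1). Qed.

Lemma cos_taylor_14_16 x : -2 <= x <= 2 ->
  1 - x^2/2 + x^4/24 - x^6/720 + x^8/40320 - x^10/3628800 + x^12/479001600
    - x^14/87178291200 <= cos x <=
  1 - x^2/2 + x^4/24 - x^6/720 + x^8/40320 - x^10/3628800 + x^12/479001600
    - x^14/87178291200 + x^16/20922789888000.
Proof. intros [H0 H1]; taylor_bounds (pre_cos_bound x 3 H0 H1). Qed.

Lemma PI_bounds : 333/106 <= PI <= 355/113.
Proof.
  split.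
  - enough (333/212 < PI/2) by lra.
    apply PI2_lower_bound; [lra |].
    pose proof (cos_taylor_10_12 (333/212) ltac:(lra)); lra.
  - destruct (Rle_lt_dec PI (355/113)) as [Hle | Hgt]; [exact Hle | exfalso].
    assert (Hcos : 0 < cos (355/226)) by (apply cos_gt_0; lra).
    pose proof (cos_taylor_14_16 (355/226) ltac:(lra)); lra.
Qed.

Lemma pow_mul_pow_bounds (u d h e : R) (k i j : nat) :
  0 <= u <= h -> 0 <= d <= e -> 0 <= u ^ (k + i) * d ^ j <= h ^ i * e ^ j * u ^ k.
Proof.
  intros [Hu Huh] [Hd Hde].
  assert (0 <= u ^ k) by (apply pow_le; lra).
  assert (0 <= u ^ i <= h ^ i) by (split; [apply pow_le | apply pow_incr]; lra).
  assert (0 <= d ^ j <= e ^ j) by (split; [apply pow_le | apply pow_incr]; lra).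
  rewrite pow_add; split.
  - repeat apply Rmult_le_pos; lra.
  - rewrite (Rmult_comm (h ^ i * e ^ j)), Rmult_assoc.
    apply Rmult_le_compat_l; [lra |].
    apply Rmult_le_compat; lra.
Qed.

Ltac bound_monomials Hu Hd k m n :=
  let rec row i j :=
    let H := fresh in
    pose proof (pow_mul_pow_bounds _ _ _ _ k i j Hu Hd) as H; cbn [Nat.add] in H;
    lazymatch j with O => idtac | S ?j' => row i j' end in
  let rec rows i :=
    row i n;
    lazymatch i with O => idtac | S ?i' => rows i' end in
  rows m.

(* Proves a polynomial inequality in [t] and [p] on the box
   [t0, t0 + h] x [p0, p0 + e], where the difference of its two sides vanishes
   to order [k] at [t = t0]: after the shift [t = t0 + u], [p = p0 + d] each
   monomial [u^(k+i) d^j] lies between [0] and [h^i e^j u^k], which leaves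
   [lra] a linear certificate in these monomials. *)
Ltac poly_le_on_box t t0 h p p0 e k m n :=
  let u := fresh "u" in let d := fresh "d" in
  let Hu := fresh "Hu" in let Hd := fresh "Hd" in
  assert (Hu : 0 <= t - t0 <= h) by lra;
  assert (Hd : 0 <= p - p0 <= e) by lra;
  replace t with (t0 + (t - t0)) by ring;
  replace p with (p0 + (p - p0)) by ring;
  generalize dependent (t - t0); intros u Hu;
  generalize dependent (p - p0); intros d Hd;
  bound_monomials Hu Hd k m n; lra.

Ltac poly_le_on_PI_box t t0 h k m n :=
  pose proof PI_bounds;
  poly_le_on_box t t0 h PI (333/106) (355/113 - 333/106) k m n.

Lemma tan_upper_taylor_0 x : 0 <= x <= 3/4 ->
  (PI^2 - 4*x^2) * (x - x^3/6 + x^5/120) <= PI^2 * x * (1 - x^2/2).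
Proof.
  intros Hx.
  poly_le_on_PI_box x 0 (3/4) 3%nat 4%nat 2%nat.
Qed.

Lemma tan_upper_taylor_PI2 y : 0 <= y <= 53/64 ->
  (PI^2 - 4*(PI/2 - y)^2) * (1 - y^2/2 + y^4/24) <= PI^2 * (PI/2 - y) * (y - y^3/6).
Proof.
  intros Hy.
  destruct (Rle_dec y (31/64)).
  { poly_le_on_PI_box y 0 (31/64) 1%nat 5%nat 3%nat. }
  destruct (Rle_dec y (51/64)).
  { poly_le_on_PI_box y (31/64) (5/16) 0%nat 6%nat 3%nat. }
  poly_le_on_PI_box y (51/64) (1/32) 0%nat 6%nat 3%nat.
Qed.

Lemma tan_lower_taylor_0 x : 0 <= x <= 3/4 ->
  (PI^4*x - 4*(PI^2-8)*x^3) * (1 - x^2/2 + x^4/24 - x^6/720 + x^8/40320) <=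
  PI^2*(PI^2 - 4*x^2) * (x - x^3/6 + x^5/120 - x^7/5040).
Proof.
  intros Hx.
  poly_le_on_PI_box x 0 (3/4) 3%nat 8%nat 4%nat.
Qed.

Lemma tan_lower_taylor_PI2 y : 0 <= y <= 53/64 ->
  (PI^4*(PI/2 - y) - 4*(PI^2-8)*(PI/2 - y)^3) *
    (y - y^3/6 + y^5/120 - y^7/5040 + y^9/362880) <=
  PI^2*(PI^2 - 4*(PI/2 - y)^2) * (1 - y^2/2 + y^4/24 - y^6/720).
Proof.
  intros Hy.
  destruct (Rle_dec y (25/64)).
  { poly_le_on_PI_box y 0 (25/64) 2%nat 10%nat 4%nat. }
  destruct (Rle_dec y (11/16)).
  { poly_le_on_PI_box y (25/64) (19/64) 0%nat 12%nat 4%nat. }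
  poly_le_on_PI_box y (11/16) (9/64) 0%nat 12%nat 4%nat.
Qed.

Lemma Rmult_le_of_bounds (A B s s' c c' : R) :
  0 <= A -> 0 <= B -> s <= s' -> c' <= c -> B * s' <= A * c' -> B * s <= A * c.
Proof.
  intros HA HB Hs Hc H.
  apply Rle_trans with (B * s'); [apply Rmult_le_compat_l; lra |].
  apply Rle_trans with (A * c'); [lra | apply Rmult_le_compat_l; lra].
Qed.

Lemma tan_le_Becker_Stark x : 0 < x < PI/2 -> tan x * (PI^2 - 4*x^2) <= PI^2 * x.
Proof.
  intros Hx; pose proof PI_bounds as HPI.
  assert (Hcos : 0 < cos x) by (apply cos_gt_0; lra).
  assert (HB : 0 <= PI^2 - 4*x^2) by nra.
  enough (H : (PI^2 - 4*x^2) * sin x <= PI^2 * x * cos x).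
  { unfold tan; apply Rmult_le_reg_r with (cos x); [exact Hcos |].
    replace (sin x / cos x * (PI^2 - 4*x^2) * cos x) with ((PI^2 - 4*x^2) * sin x)
      by (field; lra).
    exact H. }
  destruct (Rle_dec x (3/4)) as [Hnear0 | HnearPI2].
  - destruct (sin_taylor_3_5 x) as [_ Hsin]; [lra |].
    destruct (cos_taylor_2_4 x) as [Hcos' _]; [lra |].
    eapply Rmult_le_of_bounds; [nra | exact HB | exact Hsin | exact Hcos' |].
    apply tan_upper_taylor_0; lra.
  - set (y := PI/2 - x).
    assert (Ex : x = PI/2 - y) by (unfold y; ring).
    clearbody y; subst x.
    rewrite cos_shift, sin_shift.
    destruct (cos_taylor_2_4 y) as [_ Hcos']; [lra |].
    destruct (sin_taylor_3_5 y) as [Hsin _]; [lra |].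
    eapply Rmult_le_of_bounds; [nra | exact HB | exact Hcos' | exact Hsin |].
    apply tan_upper_taylor_PI2; lra.
Qed.

Lemma tan_ge_Becker_Stark_refined x : 0 < x < PI/2 ->
  PI^4*x - 4*(PI^2-8)*x^3 <= PI^2*(PI^2 - 4*x^2) * tan x.
Proof.
  intros Hx; pose proof PI_bounds as HPI.
  assert (Hcos : 0 < cos x) by (apply cos_gt_0; lra).
  assert (Hgap : 0 <= PI^2 - 4*x^2) by nra.
  assert (HA : 0 <= PI^2*(PI^2 - 4*x^2)) by (apply Rmult_le_pos; nra).
  assert (HB : 0 <= PI^4*x - 4*(PI^2-8)*x^3).
  { assert (0 <= x * ((PI^2-8)*(PI^2 - 4*x^2) + 8*PI^2)) by (apply Rmult_le_pos; nra).
    lra. }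
  enough (H : (PI^4*x - 4*(PI^2-8)*x^3) * cos x <= PI^2*(PI^2 - 4*x^2) * sin x).
  { unfold tan; apply Rmult_le_reg_r with (cos x); [exact Hcos |].
    replace (PI^2*(PI^2 - 4*x^2) * (sin x / cos x) * cos x)
      with (PI^2*(PI^2 - 4*x^2) * sin x) by (field; lra).
    exact H. }
  destruct (Rle_dec x (3/4)) as [Hnear0 | HnearPI2].
  - destruct (cos_taylor_6_8 x) as [_ Hcos']; [lra |].
    destruct (sin_taylor_7_9 x) as [Hsin _]; [lra |].
    eapply Rmult_le_of_bounds; [exact HA | exact HB | exact Hcos' | exact Hsin |].
    apply tan_lower_taylor_0; lra.
  - set (y := PI/2 - x).
    assert (Ex : x = PI/2 - y) by (unfold y; ring).
    clearbody y; subst x.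
    rewrite cos_shift, sin_shift.
    destruct (sin_taylor_7_9 y) as [_ Hsin]; [lra |].
    destruct (cos_taylor_6_8 y) as [Hcos' _]; [lra |].
    eapply Rmult_le_of_bounds; [exact HA | exact HB | exact Hsin | exact Hcos' |].
    apply tan_lower_taylor_PI2; lra.
Qed.

Lemma le_smaller_root (k b c m : R) :
  0 < k -> 2*k*m <= b -> 0 <= k*m^2 - b*m + c ->
  2*k*m <= b - sqrt (b^2 - 4*k*c).
Proof.
  intros Hk Hm Hq.
  enough (sqrt (b^2 - 4*k*c) <= b - 2*k*m) by lra.
  rewrite <- (sqrt_pow2 (b - 2*k*m)) by lra.
  apply sqrt_le_1_alt.
  assert (0 <= 4*k*(k*m^2 - b*m + c)) by (apply Rmult_le_pos; lra).
  nra.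
Qed.

Lemma is_robin_lambda1_angle a alpha lam : 0 < a -> is_robin_lambda1 a alpha lam ->
  exists x, 0 < x < PI/2 /\ lam = (2*x/a)^2 /\ alpha = 2*x/a * tan x.
Proof.
  intros Ha [[Hlam Hlam'] Halpha].
  pose proof PI_RGT_0 as HPI.
  assert (Hs : 0 < sqrt lam) by (apply sqrt_lt_R0; lra).
  assert (Hss : sqrt lam * sqrt lam = lam) by (apply sqrt_sqrt; lra).
  assert (0 < a * sqrt lam) by nra.
  assert (Has : a * sqrt lam < PI).
  { assert (lam * a^2 < PI^2).
    { apply Rmult_lt_compat_r with (r := a^2) in Hlam'; [| nra].
      replace (PI^2/a^2*a^2) with (PI^2) in Hlam' by (field; lra). lra. }
    nra. }
  exists (a * sqrt lam / 2); repeat split; try lra.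
  - replace (2 * (a * sqrt lam / 2) / a) with (sqrt lam) by (field; lra). lra.
  - rewrite Halpha. f_equal. field. lra.
Qed.

Lemma robin_lambda1_lower_bound a alpha x : 0 < a -> 0 < x < PI/2 -> alpha = 2*x/a * tan x ->
  2 * alpha * PI ^ 2 / (a * (PI ^ 2 + 2 * alpha * a)) <= (2*x/a)^2.
Proof.
  intros Ha Hx ->.
  pose proof PI_RGT_0.
  assert (Ht : 0 < tan x) by (apply tan_gt_0; lra).
  pose proof (tan_le_Becker_Stark x Hx) as Htan.
  assert (Hden : 0 < PI^2 + 4*x*tan x) by nra.
  enough (0 <= 4*x*(PI^2*x - tan x*(PI^2 - 4*x^2)) / (a^2*(PI^2 + 4*x*tan x))).
  { enough ((2*x/a)^2 - 2 * (2*x/a * tan x) * PI^2 / (a * (PI^2 + 2 * (2*x/a * tan x) * a))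
            = 4*x*(PI^2*x - tan x*(PI^2 - 4*x^2)) / (a^2*(PI^2 + 4*x*tan x))) by lra.
    field; split; lra. }
  apply Rle_mult_inv_pos.
  - apply Rmult_le_pos; lra.
  - apply Rmult_lt_0_compat; [apply pow_lt |]; lra.
Qed.

Lemma robin_lambda1_upper_bound a alpha x : 0 < a -> 0 < x < PI/2 -> alpha = 2*x/a * tan x ->
  (2*x/a)^2 <= PI ^ 2 / a ^ 2 *
    ((PI ^ 2 + 2 * a * alpha - sqrt (64 * a * alpha + (PI ^ 2 - 2 * a * alpha) ^ 2))
     / (2 * (PI ^ 2 - 8))).
Proof.
  intros Ha Hx Halpha.
  pose proof PI_bounds as HPI.
  assert (Ht : 0 < tan x) by (apply tan_gt_0; lra).
  pose proof (tan_ge_Becker_Stark_refined x Hx) as Htan.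
  assert (Haalpha : 2 * a * alpha = 4 * x * tan x) by (rewrite Halpha; field; lra).
  set (k := PI^2 - 8).
  set (m := 4*x^2/PI^2).
  assert (Hk : 0 < k) by (unfold k; nra).
  replace (64 * a * alpha + (PI^2 - 2 * a * alpha)^2)
    with ((PI^2 + 2*a*alpha)^2 - 4*k*(2*a*alpha)) by (unfold k; ring).
  replace ((2*x/a)^2) with (PI^2/a^2 * (2*k*m / (2*k))) by (unfold m; field; lra).
  apply Rmult_le_compat_l; [apply Rle_mult_inv_pos; nra |].
  apply Rmult_le_compat_r; [left; apply Rinv_0_lt_compat; lra |].
  apply le_smaller_root; [exact Hk | |]; rewrite Haalpha.
  - assert (m <= 1) by (unfold m; apply Rmult_le_reg_r with (PI^2); [nra |]; field_simplify; nra).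
    unfold k in *; nra.
  - replace (k*m^2 - (PI^2 + 4*x*tan x)*m + 4*x*tan x)
      with (4*x/PI^4 * (PI^2*(PI^2 - 4*x^2) * tan x - (PI^4*x - 4*k*x^3)))
      by (unfold m, k; field; lra).
    apply Rmult_le_pos; [apply Rle_mult_inv_pos; [lra | apply pow_lt; lra] | unfold k; lra].
Qed.

Theorem propositionA1 (a alpha lam : R) :
  0 < a -> 0 < alpha -> is_robin_lambda1 a alpha lam ->
  2 * alpha * PI ^ 2 / (a * (PI ^ 2 + 2 * alpha * a)) <= lam /\
  lam <= PI ^ 2 / a ^ 2 *
         ((PI ^ 2 + 2 * a * alpha
           - sqrt (64 * a * alpha + (PI ^ 2 - 2 * a * alpha) ^ 2))
          / (2 * (PI ^ 2 - 8))).
Proof.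
  intros Ha _ Hrobin.
  destruct (is_robin_lambda1_angle a alpha lam Ha Hrobin) as (x & Hx & -> & Halpha).
  split.
  - exact (robin_lambda1_lower_bound a alpha x Ha Hx Halpha).
  - exact (robin_lambda1_upper_bound a alpha x Ha Hx Halpha).
Qed.
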